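(* Let $\{a_k\}_{k\ge0}$ with $\operatorname{Im}a_k>0$ be arbitrary and put $b_k:=\overline{a_{k-1}}$ for $k\ge1$; let $\{\Phi_k\}_{k\in\mathbb Z}$ be the associated system. Then for every integer $n\ge0$ and all real $x\ne t$, $$\sum_{k=-n}^{n-1}\overline{\Phi_k(x)}\,\Phi_k(t)=\frac{1}{t-x}\,\sin\Bigg(\int_x^t\sum_{k=0}^{n-1}\frac{2\operatorname{Im}a_k}{(u-\operatorname{Re}a_k)^2+(\operatorname{Im}a_k)^2}\,du\Bigg).$$
   Context: For $\mathbf a=\{a_k\}_{k\ge0}$ with $\operatorname{Im}a_k>0$: $\chi_k^+:=\frac{|1+a_k^2|}{1+a_k^2}$ (take $1$ if $1+a_k^2=0$), $B_0^+(z):=1$, $B_n^+(z):=\prod_{k=0}^{n-1}\chi_k^+\frac{z-a_k}{z-\overline{a_k}}$ ($n\ge1$), $\Phi_n^+(z):=\frac{\sqrt{\operatorname{Im}a_n}}{z-\overline{a_n}}B_n^+(z)$ ($n\ge0$). For $\mathbf b=\{b_k\}_{k\ge1}$ with $\operatorname{Im}b_k<0$: $\chi_k^-:=\frac{|1+b_k^2|}{1+b_k^2}$ (take $1$ if $1+b_k^2=0$), $B_1^-(z):=1$, $B_n^-(z):=\prod_{k=1}^{n-1}\chi_k^-\frac{z-b_k}{z-\overline{b_k}}$ ($n\ge2$), $\Phi_n^-(z):=\frac{\sqrt{-\operatorname{Im}b_n}}{z-\overline{b_n}}B_n^-(z)$ ($n\ge1$). Finally $\Phi_n:=\Phi_n^+$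 for $n=0,1,2,\dots$ and $\Phi_n:=\Phi_{-n}^-$ for $n=-1,-2,\dots$. *)

From Stdlib Require Import Reals ZArith.
Open Scope R_scope.

Record Cpx := mkC { Re : R; Im : R }.

Definition RtoC (x : R) : Cpx := mkC x 0.
Definition C0 : Cpx := mkC 0 0.
Definition C1 : Cpx := mkC 1 0.
Definition Cadd (z w : Cpx) : Cpx := mkC (Re z + Re w) (Im z + Im w).
Definition Cneg (z : Cpx) : Cpx := mkC (- Re z) (- Im z).
Definition Csub (z w : Cpx) : Cpx := Cadd z (Cneg w).
Definition Cmul (z w : Cpx) : Cpx :=
  mkC (Re z * Re w - Im z * Im w) (Re z * Im w + Im z * Re w).
Definition Cconj (z : Cpx) : Cpx := mkC (Re z) (- Im z).
Definition Cnorm2 (z : Cpx) : R := Re z * Re z + Im z * Im z.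
Definition Cabs (z : Cpx) : R := sqrt (Cnorm2 z).
Definition Cinv (z : Cpx) : Cpx := mkC (Re z / Cnorm2 z) (- Im z / Cnorm2 z).
Definition Cdiv (z w : Cpx) : Cpx := Cmul z (Cinv w).

Definition Cis0 (z : Cpx) : bool :=
  if Req_EM_T (Re z) 0 then (if Req_EM_T (Im z) 0 then true else false) else false.

Definition chi (c : Cpx) : Cpx :=
  let w := Cadd C1 (Cmul c c) in
  if Cis0 w then C1 else Cdiv (RtoC (Cabs w)) w.

Definition Bfactor (c z : Cpx) : Cpx :=
  Cmul (chi c) (Cdiv (Csub z c) (Csub z (Cconj c))).

Fixpoint Bplus (a : nat -> Cpx) (n : nat) (z : Cpx) : Cpx :=
  match n with
  | O => C1
  | S m => Cmul (Bplus a m z) (Bfactor (a m) z)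
  end.

Definition Phiplus (a : nat -> Cpx) (n : nat) (z : Cpx) : Cpx :=
  Cmul (Cdiv (RtoC (sqrt (Im (a n)))) (Csub z (Cconj (a n)))) (Bplus a n z).

(* B_n^-(z) = prod_{k=1}^{n-1} chi_k^- (z-b_k)/(z-conj b_k), for n >= 1 (B_1^- = 1) *)
Fixpoint Bminus (b : nat -> Cpx) (n : nat) (z : Cpx) : Cpx :=
  match n with
  | O => C1
  | S O => C1
  | S m => Cmul (Bminus b m z) (Bfactor (b m) z)
  end.

Definition Phiminus (b : nat -> Cpx) (n : nat) (z : Cpx) : Cpx :=
  Cmul (Cdiv (RtoC (sqrt (- Im (b n)))) (Csub z (Cconj (b n)))) (Bminus b n z).

Definition Phi (a b : nat -> Cpx) (k : Z) (z : Cpx) : Cpx :=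
  if Z.leb 0 k then Phiplus a (Z.to_nat k) z else Phiminus b (Z.to_nat (- k)) z.

Fixpoint sumZ (f : Z -> Cpx) (lo : Z) (len : nat) : Cpx :=
  match len with
  | O => C0
  | S m => Cadd (sumZ f lo m) (f (lo + Z.of_nat m)%Z)
  end.

Fixpoint rsum (g : nat -> R) (n : nat) : R :=
  match n with
  | O => 0
  | S m => rsum g m + g m
  end.

Definition integrand (a : nat -> Cpx) (n : nat) (u : R) : R :=
  rsum (fun k => 2 * Im (a k) / ((u - Re (a k)) ^ 2 + (Im (a k)) ^ 2)) n.

(* On the real line each Blaschke factor is unimodular, (u - c)/(u - conj c) = -exp(i ang_c(u))
   with ang_c(u) = 2 atan((u - Re c)/Im c), so B_n(x) conj(B_n(t)) = exp(i(theta_n(x) - theta_n(t)))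
   where theta_n is the sum of the angles; theta_n' is the integrand of the theorem.
   With b_k = conj(a_(k-1)) the negative-index functions are Phi_(-k-1) = conj(Phi_k) on the real
   line, so the symmetric sum is sum_(k<n) 2 Re(conj(Phi_k(x)) Phi_k(t)).  Each of these terms is a
   telescoping difference, a Christoffel-Darboux identity:
   Im(B_(k+1)(x) conj B_(k+1)(t)) - Im(B_k(x) conj B_k(t)) = 2 (x - t) Re(conj(Phi_k(x)) Phi_k(t)). *)
From Pilot Require Import Defs.
From Stdlib Require Import Reals ZArith Lra Lia.
From Coquelicot Require Import Coquelicot.
(* Coquelicot's complex numbers shadow [Re] and [Im]. *)
Import Pilot.Defs.
Open Scope R_scope.

Lemma Ceq (z w : Cpx) : Re z = Re w -> Im z = Im w -> z = w.
Proof. destruct z, w; simpl; intros -> ->; reflexivity. Qed.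

Ltac cring := apply Ceq; simpl; ring.

Lemma Cconj_mul z w : Cconj (Cmul z w) = Cmul (Cconj z) (Cconj w).
Proof. cring. Qed.

Lemma Cconj_sub z w : Cconj (Csub z w) = Csub (Cconj z) (Cconj w).
Proof. cring. Qed.

Lemma Cconj_involutive z : Cconj (Cconj z) = z.
Proof. cring. Qed.

Lemma Cconj_RtoC r : Cconj (RtoC r) = RtoC r.
Proof. cring. Qed.

Lemma Cnorm2_conj w : Cnorm2 (Cconj w) = Cnorm2 w.
Proof. unfold Cnorm2; simpl; ring. Qed.

Lemma Cconj_div z w : Cconj (Cdiv z w) = Cdiv (Cconj z) (Cconj w).
Proof.
  unfold Cdiv, Cinv. rewrite Cconj_mul, Cnorm2_conj.
  f_equal; apply Ceq; simpl; unfold Rdiv; ring.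
Qed.

Lemma Cadd_conj_l w : Cadd (Cconj w) w = RtoC (2 * Re w).
Proof. cring. Qed.

Lemma Cis0_conj w : Cis0 (Cconj w) = Cis0 w.
Proof.
  unfold Cis0; simpl.
  destruct (Req_EM_T (Re w) 0); auto.
  destruct (Req_EM_T (- Im w) 0), (Req_EM_T (Im w) 0); auto; lra.
Qed.

Lemma chi_conj c : chi (Cconj c) = Cconj (chi c).
Proof.
  unfold chi.
  replace (Cadd C1 (Cmul (Cconj c) (Cconj c))) with (Cconj (Cadd C1 (Cmul c c))) by cring.
  rewrite Cis0_conj. destruct (Cis0 _).
  - cring.
  - unfold Cabs. rewrite Cconj_div, Cconj_RtoC, Cnorm2_conj. reflexivity.
Qed.

Lemma chi_mul_conj c : Cmul (chi c) (Cconj (chi c)) = C1.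
Proof.
  unfold chi. destruct (Cis0 _) eqn:E; [cring|].
  destruct (Cadd C1 (Cmul c c)) as [r i].
  assert (HN : r * r + i * i <> 0).
  { unfold Cis0 in E; simpl in E.
    destruct (Req_EM_T r 0); [destruct (Req_EM_T i 0)|]; try discriminate; nra. }
  assert (HS : sqrt (r * r + i * i) * sqrt (r * r + i * i) = r * r + i * i)
    by (apply sqrt_sqrt; nra).
  unfold Cdiv, Cinv, Cabs, Cnorm2; simpl. set (A := sqrt (r * r + i * i)) in *.
  apply Ceq; simpl.
  - transitivity (A * A * (r * r + i * i) / ((r * r + i * i) * (r * r + i * i)));
      [field; auto|].
    rewrite HS. field; auto.
  - field; auto.
Qed.

Lemma Bminus_shift_conj a n u :
  Bminus (fun k => Cconj (a (k - 1)%nat)) (S n) (RtoC u) = Cconj (Bplus a n (RtoC u)).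
Proof.
  induction n as [|n IHn]; [cring|].
  change (Cmul (Bminus (fun k => Cconj (a (k - 1)%nat)) (S n) (RtoC u))
               (Bfactor (Cconj (a (S n - 1)%nat)) (RtoC u))
          = Cconj (Cmul (Bplus a n (RtoC u)) (Bfactor (a n) (RtoC u)))).
  replace (S n - 1)%nat with n by lia.
  rewrite IHn, Cconj_mul. unfold Bfactor.
  rewrite Cconj_mul, chi_conj, Cconj_div, !Cconj_sub, Cconj_involutive, Cconj_RtoC.
  reflexivity.
Qed.

Lemma Phiminus_shift_conj a n u :
  Phiminus (fun k => Cconj (a (k - 1)%nat)) (S n) (RtoC u) = Cconj (Phiplus a n (RtoC u)).
Proof.
  unfold Phiminus, Phiplus. rewrite Bminus_shift_conj.
  replace (S n - 1)%nat with n by lia.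
  rewrite Cconj_mul, Cconj_div, Cconj_sub, !Cconj_RtoC, Cconj_involutive.
  simpl Im. rewrite Ropp_involutive. reflexivity.
Qed.

Lemma Phi_of_nat a b n z : Phi a b (Z.of_nat n) z = Phiplus a n z.
Proof.
  unfold Phi. replace (Z.leb 0 (Z.of_nat n)) with true by (symmetry; apply Z.leb_le; lia).
  rewrite Nat2Z.id. reflexivity.
Qed.

Lemma Phi_opp_succ a b n z : Phi a b (- Z.of_nat (S n)) z = Phiminus b (S n) z.
Proof.
  unfold Phi. replace (Z.leb 0 (- Z.of_nat (S n))) with false
    by (symmetry; apply Z.leb_gt; lia).
  replace (Z.to_nat (- - Z.of_nat (S n))) with (S n) by lia. reflexivity.
Qed.

Definition blaschke (c : Cpx) (u : R) : Cpx :=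
  Cdiv (Csub (RtoC u) c) (Csub (RtoC u) (Cconj c)).

Definition cauchy (c : Cpx) (u : R) : Cpx :=
  Cdiv (RtoC (sqrt (Im c))) (Csub (RtoC u) (Cconj c)).

Lemma Bfactor_RtoC c u : Bfactor c (RtoC u) = Cmul (chi c) (blaschke c u).
Proof. reflexivity. Qed.

Lemma Phiplus_RtoC a n u : Phiplus a n (RtoC u) = Cmul (cauchy (a n) u) (Bplus a n (RtoC u)).
Proof. reflexivity. Qed.

(* (x - c)(t - conj c) - (x - conj c)(t - c) = 2 i Im c (x - t). *)
Lemma blaschke_mul_conj c (Hc : 0 < Im c) x t :
  Cmul (blaschke c x) (Cconj (blaschke c t))
  = Cadd C1 (Cmul (mkC 0 (2 * (x - t))) (Cmul (cauchy c x) (Cconj (cauchy c t)))).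
Proof.
  unfold blaschke, cauchy. destruct c as [r s]; simpl in Hc.
  unfold Cdiv, Cinv, Cnorm2, RtoC, Csub, Cadd, Cneg, Cconj, Cmul; simpl.
  assert (Hq : 0 < sqrt s) by (apply sqrt_lt_R0; auto).
  assert (Hs : s = sqrt s * sqrt s) by (rewrite sqrt_sqrt; lra).
  set (q := sqrt s) in *. rewrite Hs, !Ropp_involutive.
  assert (Hpos : forall u, (u + - r) * (u + - r) + q * q * (q * q) <> 0).
  { intro u. pose proof (Rmult_lt_0_compat _ _ Hq Hq) as Hq2.
    pose proof (Rmult_lt_0_compat _ _ Hq2 Hq2). pose proof (Rle_0_sqr (u + - r)).
    unfold Rsqr in *. lra. }
  apply Ceq; simpl; field; split; apply Hpos.
Qed.

Definition cis (r : R) : Cpx := mkC (cos r) (sin r).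

Definition ang (c : Cpx) (u : R) : R := 2 * atan ((u - Re c) / Im c).

Lemma blaschke_cis c (Hc : 0 < Im c) u : blaschke c u = Cneg (cis (ang c u)).
Proof.
  unfold cis, ang. set (w := (u - Re c) / Im c).
  rewrite cos_2a, sin_2a, sin_atan, cos_atan.
  assert (HS : sqrt (1 + w²) * sqrt (1 + w²) = 1 + w²) by (apply sqrt_sqrt; unfold Rsqr; nra).
  assert (HP : 0 < sqrt (1 + w²)) by (apply sqrt_lt_R0; unfold Rsqr; nra).
  set (S := sqrt (1 + w²)) in *. unfold Rsqr in HS.
  assert (Hw : u - Re c = w * Im c) by (unfold w; field; lra).
  unfold blaschke, Cdiv, Cinv, Cnorm2, RtoC, Csub, Cadd, Cneg, Cconj, Cmul.
  destruct c as [r s]; simpl in *.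
  replace (u + - r) with (w * s) by lra.
  apply Ceq; simpl.
  - transitivity (- ((1 - w * w) / (1 + w * w))).
    + field. rewrite !Ropp_involutive. split; nra.
    + rewrite <- HS. field. lra.
  - transitivity (- (2 * w / (1 + w * w))).
    + field. rewrite !Ropp_involutive. split; nra.
    + rewrite <- HS. field. lra.
Qed.

Lemma blaschke_mul_conj_cis c (Hc : 0 < Im c) x t :
  Cmul (blaschke c x) (Cconj (blaschke c t)) = cis (ang c x - ang c t).
Proof.
  rewrite !blaschke_cis by exact Hc.
  unfold cis; apply Ceq; simpl; rewrite ?cos_minus, ?sin_minus; ring.
Qed.

Definition Bkernel (a : nat -> Cpx) (n : nat) (x t : R) : Cpx :=
  Cmul (Bplus a n (RtoC x)) (Cconj (Bplus a n (RtoC t))).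

Definition theta (a : nat -> Cpx) (n : nat) (u : R) : R := rsum (fun k => ang (a k) u) n.

Lemma Bkernel_succ a n x t :
  Bkernel a (S n) x t
  = Cmul (Bkernel a n x t) (Cmul (blaschke (a n) x) (Cconj (blaschke (a n) t))).
Proof.
  unfold Bkernel; simpl Bplus. rewrite !Bfactor_RtoC.
  transitivity (Cmul (Cmul (chi (a n)) (Cconj (chi (a n))))
    (Cmul (Bkernel a n x t) (Cmul (blaschke (a n) x) (Cconj (blaschke (a n) t))))).
  - unfold Bkernel; cring.
  - rewrite chi_mul_conj. cring.
Qed.

Lemma Bkernel_cis a (Ha : forall k, 0 < Im (a k)) n x t :
  Bkernel a n x t = cis (theta a n x - theta a n t).
Proof.
  induction n as [|n IHn].
  - unfold Bkernel, theta, cis; simpl. rewrite Rminus_diag, cos_0, sin_0. cring.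
  - rewrite Bkernel_succ, IHn, blaschke_mul_conj_cis by auto.
    unfold theta; simpl rsum. fold (theta a n x) (theta a n t).
    unfold cis; apply Ceq; simpl;
      rewrite ?cos_minus, ?sin_minus, ?cos_plus, ?sin_plus; ring.
Qed.

Lemma Bkernel_Im_succ a (Ha : forall k, 0 < Im (a k)) n x t :
  Im (Bkernel a (S n) x t) - Im (Bkernel a n x t)
  = 2 * (x - t) * Re (Cmul (Cconj (Phiplus a n (RtoC x))) (Phiplus a n (RtoC t))).
Proof.
  rewrite Bkernel_succ, blaschke_mul_conj by auto. rewrite !Phiplus_RtoC.
  unfold Bkernel.
  destruct (Bplus a n (RtoC x)), (Bplus a n (RtoC t)),
    (cauchy (a n) x), (cauchy (a n) t); simpl; ring.
Qed.

Lemma sumZ_cons f lo m : sumZ f lo (S m) = Cadd (f lo) (sumZ f (lo + 1) m).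
Proof.
  induction m as [|m IHm].
  - simpl. rewrite Z.add_0_r. cring.
  - change (Cadd (sumZ f lo (S m)) (f (lo + Z.of_nat (S m))%Z)
            = Cadd (f lo) (Cadd (sumZ f (lo + 1) m) (f (lo + 1 + Z.of_nat m)%Z))).
    rewrite IHm. replace (lo + 1 + Z.of_nat m)%Z with (lo + Z.of_nat (S m))%Z by lia.
    cring.
Qed.

Lemma sumZ_symmetric_succ f n :
  sumZ f (- Z.of_nat (S n)) (2 * S n)
  = Cadd (Cadd (f (- Z.of_nat (S n))%Z) (f (Z.of_nat n))) (sumZ f (- Z.of_nat n) (2 * n)).
Proof.
  replace (2 * S n)%nat with (S (S (2 * n))) by lia.
  rewrite sumZ_cons. replace (- Z.of_nat (S n) + 1)%Z with (- Z.of_nat n)%Z by lia.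
  change (sumZ f (- Z.of_nat n) (S (2 * n)))
    with (Cadd (sumZ f (- Z.of_nat n) (2 * n)) (f (- Z.of_nat n + Z.of_nat (2 * n))%Z)).
  replace (- Z.of_nat n + Z.of_nat (2 * n))%Z with (Z.of_nat n) by lia.
  cring.
Qed.

Lemma sum_Phi_Bkernel a (Ha : forall k, 0 < Im (a k)) x t (Hxt : x <> t) n :
  sumZ (fun k => Cmul (Cconj (Phi a (fun k => Cconj (a (k - 1)%nat)) k (RtoC x)))
                      (Phi a (fun k => Cconj (a (k - 1)%nat)) k (RtoC t)))
       (- Z.of_nat n)%Z (2 * n)%nat
  = RtoC (Im (Bkernel a n x t) / (x - t)).
Proof.
  induction n as [|n IHn].
  - apply Ceq; simpl; field; lra.
  - rewrite sumZ_symmetric_succ, IHn, !Phi_opp_succ, !Phi_of_nat, !Phiminus_shift_conj.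
    rewrite Cconj_involutive, <- (Cconj_involutive (Phiplus a n (RtoC x))) at 1.
    rewrite <- Cconj_mul, Cadd_conj_l.
    rewrite <- (Rplus_minus (Im (Bkernel a n x t)) (Im (Bkernel a (S n) x t))).
    rewrite Bkernel_Im_succ by exact Ha.
    unfold Cadd, RtoC; apply Ceq; cbn [Re Im]; [field; lra | ring].
Qed.

Lemma ang_is_RInt c (Hc : 0 < Im c) x t :
  is_RInt (fun u => 2 * Im c / ((u - Re c) ^ 2 + (Im c) ^ 2)) x t (ang c t - ang c x).
Proof.
  assert (Hden : forall u, 0 < (u - Re c) ^ 2 + Im c ^ 2).
  { intro u. pose proof (pow2_ge_0 (u - Re c)). pose proof (pow_lt _ 2 Hc). lra. }
  apply (is_RInt_derive (ang c)).
  - intros u _. unfold ang. auto_derive; [lra|].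
    specialize (Hden u).
    field. split; [lra|].
    replace (Im c * Im c + (u + - Re c) * (u + - Re c))
      with ((u - Re c) ^ 2 + Im c ^ 2) by ring. lra.
  - intros u _. apply (@ex_derive_continuous R_AbsRing R_NormedModule).
    auto_derive. specialize (Hden u). simpl in Hden. lra.
Qed.

Lemma integrand_is_RInt a (Ha : forall k, 0 < Im (a k)) x t n :
  is_RInt (integrand a n) x t (theta a n t - theta a n x).
Proof.
  induction n as [|n IHn].
  - replace (theta a 0 t - theta a 0 x) with (scal (t - x) 0)
      by (unfold theta, scal; simpl; unfold mult; simpl; ring).
    apply (@is_RInt_const R_NormedModule).
  - change (integrand a (S n)) with
      (fun u => plus (integrand a n u) (2 * Im (a n) / ((u - Re (a n)) ^ 2 + (Im (a n)) ^ 2))).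
    replace (theta a (S n) t - theta a (S n) x)
      with (plus (theta a n t - theta a n x) (ang (a n) t - ang (a n) x))
      by (unfold theta, plus; simpl; ring).
    apply (@is_RInt_plus R_NormedModule); auto using ang_is_RInt.
Qed.

Theorem mainTheorem5 (a : nat -> Cpx) (Ha : forall k, 0 < Im (a k))
  (n : nat) (x t : R) (Hxt : x <> t) :
  let b := fun k : nat => Cconj (a (k - 1)%nat) in
  exists pr : Riemann_integrable (integrand a n) x t,
    sumZ (fun k => Cmul (Cconj (Phi a b k (RtoC x))) (Phi a b k (RtoC t)))
         (- Z.of_nat n)%Z (2 * n)%nat
    = RtoC (/ (t - x) * sin (RiemannInt pr)).
Proof.
  intro b.
  pose proof (integrand_is_RInt a Ha x t n) as Hint.
  exists (ex_RInt_Reals_0 _ _ _ (ex_intro _ _ Hint)).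
  rewrite <- RInt_Reals, (is_RInt_unique _ _ _ _ Hint).
  unfold b. rewrite sum_Phi_Bkernel, Bkernel_cis by auto. simpl Im.
  replace (theta a n x - theta a n t) with (- (theta a n t - theta a n x)) by ring.
  rewrite sin_neg. f_equal. field. lra.
Qed.
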